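(* Let $H$ be an infinite-dimensional real Hilbert space. Then for every integer $m\ge1$ and every $\alpha\in(0,1]$, $$\tfrac12 m^{-\alpha/2}\le \gamma^o_m(\alpha,H)\le m^{-\alpha/2}.$$
   Context: A (symmetric) dictionary in $H$ is a set $\mathcal D$ of unit vectors with dense span and $g\in\mathcal D\Rightarrow -g\in\mathcal D$. $A_1(\mathcal D)$ is the closed convex hull of $\mathcal D$ and $\|f\|_{A_1(\mathcal D)}:=\inf\{M:f/M\in A_1(\mathcal D)\}$. Orthogonal Greedy Algorithm (OGA): for $h\in H$ let $g(h)\in\mathcal D$ maximize $\langle h,g\rangle$ over $\mathcal D$ (assumed to exist); $f^o_0:=f$, $G^o_0:=0$, and for $m\ge1$, $G^o_m(f,\mathcal D)$ is the orthogonal projection of $f$ onto $\operatorname{span}\{g(f^o_0),\dots,g(f^o_{m-1})\}$ and $f^o_m:=f-G^o_m(f,\mathcal D)$. For $\alpha\in(0,1]$, $$\gamma^o_m(\alpha,H):=\sup\frac{\|f-G^o_m(f,\mathcal D)\|}{\|f\|^{1-\alpha}\|f\|_{A_1(\mathcal D)}^{\alpha}},$$ supremum over all dictionaries $\mathcal D$, all $f\ne0$ with $\|f\|_{A_1(\mathcal D)}<\infty$, and all possible realizations of the OGA. *)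

From HB Require Import structures.
From mathcomp Require Import all_boot all_order all_algebra.
From mathcomp Require Import all_classical all_reals all_analysis.
Set Implicit Arguments. Unset Strict Implicit. Unset Printing Implicit Defensive.
Import Order.TTheory GRing.Theory Num.Theory.
Import numFieldNormedType.Exports.
Local Open Scope classical_set_scope.
Local Open Scope ring_scope.

Section OGA.
Context {R : realType} {V : completeNormedModType R}.

(* ip is a real inner product whose induced norm is the norm of V;
   together with completeness of V this makes V a real Hilbert space. *)
Definition is_inner_product (ip : V -> V -> R) : Prop :=
  [/\ forall x y, ip x y = ip y x,
      forall a x y z, ip (a *: x + y) z = a * ip x z + ip y z
    & forall x, ip x x = `|x| ^+ 2].

Definition span_set (S : set V) : set V :=
  [set x | exists n (c : 'I_n -> R) (g : 'I_n -> V),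
     (forall i, S (g i)) /\ x = \sum_(i < n) c i *: g i].

Definition infinite_dim : Prop :=
  forall n (g : 'I_n -> V), exists x, ~ span_set (range g) x.

Definition dictionary (D : set V) : Prop :=
  [/\ forall g, D g -> `|g| = 1,
      closure (span_set D) = setT
    & forall g, D g -> D (- g)].

Definition conv_hull (D : set V) : set V :=
  [set x | exists n (c : 'I_n -> R) (g : 'I_n -> V),
     [/\ forall i, D (g i), forall i, 0 <= c i, \sum_(i < n) c i = 1
       & x = \sum_(i < n) c i *: g i]].

Definition A1 (D : set V) : set V := closure (conv_hull D).

(* ||f||_{A_1(D)} = inf {M > 0 : f / M \in A_1(D)}  (+oo if no such M) *)
Definition A1norm (D : set V) (f : V) : \bar R :=
  ereal_inf [set M%:E | M in [set M : R | 0 < M /\ A1 D (M^-1 *: f)]].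

Definition is_orth_proj (ip : V -> V -> R) (S : set V) (f p : V) : Prop :=
  S p /\ forall s, S s -> ip (f - p) s = 0.

(* a realization of the OGA for f and D: gs k = g(f^o_k) is a maximizer of
   <f^o_k, .> over D, and G k = G^o_k(f,D) is the orthogonal projection of f
   onto span {gs 0, ..., gs (k-1)}, f^o_k = f - G k. *)
Definition OGA_realization (ip : V -> V -> R) (D : set V) (f : V)
    (gs G : nat -> V) : Prop :=
  forall k,
    [/\ is_orth_proj ip (span_set [set gs i | i in [set i : nat | (i < k)%N]])
          f (G k),
        D (gs k)
      & forall g, D g -> ip (f - G k) g <= ip (f - G k) (gs k)].

Definition gamma_o (ip : V -> V -> R) (m : nat) (alpha : R) : \bar R :=
  ereal_sup [set r%:E | r in [set r : R | exists D f gs G,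
     [/\ dictionary D, f != 0, (A1norm D f < +oo)%E,
         OGA_realization ip D f gs G
       & r = `|f - G m| / (`|f| `^ (1 - alpha) * (fine (A1norm D f)) `^ alpha)]]].

End OGA.

(* Upper bound: write f_k := f - G_k and c_k := <f_k, g(f_k)>.  Comparing the
   projection G_{k+1} with G_k + c_k g(f_k) gives |f_{k+1}|^2 <= |f_k|^2 - c_k^2,
   while |f_k|^2 = <f_k, f> <= |f|_{A_1} c_k because f / |f|_{A_1} lies in the
   closed convex hull of D.  The two recursions force m |f_m|^2 <= |f|_{A_1}^2,
   and interpolating with |f_m| <= |f| gives m^(-alpha/2).
   Lower bound: for orthonormal e_0, ..., e_{2m-1} take f := (2m)^-1 sum_i e_i and
   the dictionary of the +-e_i and of all unit vectors orthogonal to them.  Then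
   |f|_{A_1} = 1, the OGA may pick e_0, e_1, ... in turn (the coefficients tie), so
   |f_m| = m^(-1/2) / 2 while |f| = (2m)^(-1/2). *)

From HB Require Import structures.
From mathcomp Require Import all_boot all_order all_algebra.
From mathcomp Require Import all_classical all_reals all_analysis.
From mathcomp Require Import lra ring.
Set Implicit Arguments. Unset Strict Implicit. Unset Printing Implicit Defensive.
Import Order.TTheory GRing.Theory Num.Theory.
Import numFieldNormedType.Exports.
Local Open Scope ring_scope.
Local Open Scope classical_set_scope.

Lemma decay_step (R : realFieldType) (B K x y : R) : 0 <= K -> 0 <= y <= x ->
  B * y <= B * x - x ^+ 2 -> K * x <= B -> (K + 1) * y <= B.
Proof.
move=> K0 /andP[y0 yx] step Kx.
have x0 : 0 <= x := le_trans y0 yx.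
have B0 : 0 <= B := le_trans (mulr_ge0 K0 x0) Kx.
(* B^2 - (K+1)(Bx - x^2) is (B - Kx)(B - x) + x^2, and also B^2 + (K+1)x(x - B) *)
have key : (K + 1) * (B * x - x ^+ 2) <= B ^+ 2.
  have [xB|Bx] := lerP x B.
    have : 0 <= (B - K * x) * (B - x) by rewrite mulr_ge0 ?subr_ge0.
    by have := sqr_ge0 x; nra.
  have : 0 <= (K + 1) * x * (x - B) by apply: mulr_ge0; [apply: mulr_ge0|]; lra.
  by have := sqr_ge0 B; nra.
have [B_eq0|B_neq0] := eqVneq B 0.
  have x_eq0 : x = 0.
    by apply/eqP; rewrite -sqrf_eq0 eq_le sqr_ge0 andbT; rewrite B_eq0 in step; lra.
  have y_eq0 : y = 0 by apply/le_anti; rewrite y0 -x_eq0 yx.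
  by rewrite y_eq0 mulr0.
have B_gt0 : 0 < B by rewrite lt_def B_neq0.
by rewrite -(ler_pM2l B_gt0); nra.
Qed.

Lemma greedy_decay_bound (R : realFieldType) (a c : nat -> R) (A : R) :
  (forall k, 0 <= a k) -> (forall k, a k.+1 <= a k - c k ^+ 2) ->
  (forall k, a k <= A * c k) -> forall k, k%:R * a k <= A ^+ 2.
Proof.
move=> a_ge0 a_decr a_le; elim=> [|k IH]; first by rewrite mul0r sqr_ge0.
rewrite -natr1; apply: decay_step IH => //.
- by rewrite a_ge0 (le_trans (a_decr k)) // lerBlDr lerDl sqr_ge0.
- have : a k ^+ 2 <= (A * c k) ^+ 2 by rewrite lerXn2r ?nnegrE ?(le_trans (a_ge0 k)).
  by have := a_decr k; have := sqr_ge0 A; rewrite exprMn; nra.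
Qed.

Section PowR.
Variable R : realType.
Implicit Types x y z t a : R.

Lemma powR_split a x : 0 <= x -> x = x `^ (1 - a) * x `^ a.
Proof. by move=> x0; rewrite -powRD subrK ?powRr1// oner_eq0. Qed.

Lemma ratio_le_powR x y z t a : 0 <= x <= y -> 0 <= z -> 0 <= t ->
  x <= z * t -> 0 <= a <= 1 -> x / (y `^ (1 - a) * z `^ a) <= t `^ a.
Proof.
move=> /andP[x0 xy] z0 t0 xzt /andP[a0 a1].
have xle : x <= y `^ (1 - a) * z `^ a * t `^ a.
  rewrite {1}(powR_split a x0) -mulrA -powRM //.
  apply: ler_pM; rewrite ?powR_ge0 //;
    apply: ge0_ler_powR; rewrite ?nnegrE ?subr_ge0 ?mulr_ge0 //.
  exact: le_trans xy.
move: xle; set d := y `^ (1 - a) * z `^ a => xle.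
have [d0|dn0] := eqVneq d 0; first by rewrite d0 invr0 mulr0 powR_ge0.
by rewrite ler_pdivrMr 1?mulrC // lt_def dn0 mulr_ge0 ?powR_ge0.
Qed.

Lemma powR_le_ratio y t a : 0 < y <= t -> 0 <= a <= 1 ->
  t `^ a <= t / y `^ (1 - a).
Proof.
move=> /andP[y0 yt] /andP[a0 a1].
rewrite ler_pdivlMr ?powR_gt0 // {2}(powR_split a (ltW (lt_le_trans y0 yt))) mulrC.
apply: ler_wpM2r; first exact: powR_ge0.
by apply: ge0_ler_powR; rewrite ?nnegrE ?subr_ge0 // ltW // (lt_le_trans y0 yt).
Qed.

Lemma sqr_powR_Nhalf x : 0 <= x -> (x `^ (-1 / 2)) ^+ 2 = x^-1.
Proof.
move=> x0; rewrite -powR_mulrn ?powR_ge0 // -powRrM -mulrA mulVf ?mulr1 //.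
exact: powR_inv1.
Qed.

Lemma powR_Nhalf_powR x a : (x `^ (-1 / 2)) `^ a = x `^ (- a / 2).
Proof. by rewrite -powRrM; congr (_ `^ _); ring. Qed.

End PowR.

Section InnerProduct.
Variables (R : realType) (V : completeNormedModType R) (ip : V -> V -> R).
Hypothesis ip_inner : is_inner_product ip.

Lemma ipC x y : ip x y = ip y x.
Proof. by case: ip_inner. Qed.

Lemma ipxx x : ip x x = `|x| ^+ 2.
Proof. by case: ip_inner. Qed.

Lemma ipZDl a x y z : ip (a *: x + y) z = a * ip x z + ip y z.
Proof. by case: ip_inner. Qed.

Lemma ip0l z : ip 0 z = 0.
Proof. by have := ipZDl 1 0 0 z; rewrite scale1r addr0 mul1r; lra. Qed.

Lemma ipDl x y z : ip (x + y) z = ip x z + ip y z.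
Proof. by rewrite -{1}(scale1r x) ipZDl mul1r. Qed.

Lemma ipZl a x z : ip (a *: x) z = a * ip x z.
Proof. by rewrite -(addr0 (a *: x)) ipZDl ip0l addr0. Qed.

Lemma ipNl x z : ip (- x) z = - ip x z.
Proof. by rewrite -scaleN1r ipZl mulN1r. Qed.

Lemma ipBl x y z : ip (x - y) z = ip x z - ip y z.
Proof. by rewrite ipDl ipNl. Qed.

Lemma ipDr x y z : ip z (x + y) = ip z x + ip z y.
Proof. by rewrite ipC ipDl !(ipC z). Qed.

Lemma ipZr a x z : ip z (a *: x) = a * ip z x.
Proof. by rewrite ipC ipZl ipC. Qed.

Lemma ipNr x z : ip z (- x) = - ip z x.
Proof. by rewrite ipC ipNl ipC. Qed.

Lemma ipBr x y z : ip z (x - y) = ip z x - ip z y.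
Proof. by rewrite ipDr ipNr. Qed.

Lemma ip_suml I (r : seq I) (P : pred I) (c : I -> R) (g : I -> V) z :
  ip (\sum_(i <- r | P i) c i *: g i) z = \sum_(i <- r | P i) c i * ip (g i) z.
Proof.
apply: (big_ind2 (fun v s => ip v z = s)); first exact: ip0l.
  by move=> ? ? ? ? <- <-; rewrite ipDl.
by move=> i _; rewrite ipZl.
Qed.

Lemma ip_le_norm x y : ip x y <= `|x| * `|y|.
Proof.
have xy2 : `|x + y| ^+ 2 <= (`|x| + `|y|) ^+ 2.
  by rewrite lerXn2r ?nnegrE ?addr_ge0 ?ler_normD.
by move: xy2; rewrite -ipxx ipDl !ipDr (ipC y x) !ipxx; lra.
Qed.

Lemma closure_ip_le (S : set V) a s x :
  (forall y, S y -> ip a y <= s) -> closure S x -> ip a x <= s.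
Proof.
move=> Sle Sx; apply/ler_addgt0Pr => e e0.
have de0 : 0 < e / (`|a| + 1) by rewrite divr_gt0 // ltr_pwDr.
have [y [Sy /=]] := Sx _ (nbhsx_ballx x _ de0).
rewrite -ball_normE /ball_ /= => xy.
have axy : ip a (x - y) <= e.
  apply: le_trans (ip_le_norm _ _) _.
  apply: le_trans (_ : `|a| * (e / (`|a| + 1)) <= e).
    by rewrite ler_wpM2l // ltW.
  by rewrite mulrA ler_pdivrMr ?ltr_pwDr //; nra.
by move: axy (Sle _ Sy); rewrite ipBr; lra.
Qed.

Lemma span_set0 (S : set V) : span_set S 0.
Proof. by exists 0%N, (fun=> 0), (fun=> 0); split => [[]//|]; rewrite big_ord0. Qed.

Lemma span_set_sub (S T : set V) : S `<=` T -> span_set S `<=` span_set T.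
Proof.
by move=> ST x [n [c [g [Sg ->]]]]; exists n, c, g; split => // i; apply: ST.
Qed.

Lemma span_setDZ (S : set V) x y a :
  span_set S x -> S y -> span_set S (x + a *: y).
Proof.
move=> [n [c [g [Sg ->]]]] Sy.
exists n.+1, (fun i => if unlift ord_max i is Some j then c j else a),
  (fun i => if unlift ord_max i is Some j then g j else y); split.
  by move=> i; case: (unlift ord_max i).
rewrite big_ord_recr /= unlift_none; congr (_ + _); apply: eq_bigr => i _.
have -> : widen_ord (leqnSn n) i = lift ord_max i by exact/val_inj/esym/lift_max.
by rewrite liftK.
Qed.

Lemma ip_span_eq0 (S : set V) a x :
  (forall y, S y -> ip a y = 0) -> span_set S x -> ip a x = 0.
Proof.
move=> Sa [n [c [g [Sg ->]]]]; rewrite ipC ip_suml big1 // => i _.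
by rewrite ipC Sa // mulr0.
Qed.

Lemma A1_ip_le (D : set V) a s x :
  (forall g, D g -> ip a g <= s) -> A1 D x -> ip a x <= s.
Proof.
move=> Dle; apply: closure_ip_le => _ [n [c [g [Dg c0 c1 ->]]]].
rewrite ipC ip_suml -[s]mul1r -c1 mulr_suml; apply: ler_sum => i _.
by rewrite ipC; apply: ler_wpM2l; [exact: c0 | exact: Dle].
Qed.

Lemma A1norm_ge0 (D : set V) f : (0 <= A1norm D f)%E.
Proof. by apply: le_ereal_inf_tmp => _ [M [M0 _] <-]; rewrite lee_fin ltW. Qed.

Lemma A1norm_fin_num (D : set V) f :
  (A1norm D f < +oo)%E -> A1norm D f \is a fin_num.
Proof. by move=> Dlty; rewrite ge0_fin_numE ?A1norm_ge0. Qed.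

Lemma A1norm_lty_scaled_mem (D : set V) f :
  (A1norm D f < +oo)%E -> exists2 M, 0 < M & A1 D (M^-1 *: f).
Proof.
move=> Dlty; apply: contrapT => noM; move: Dlty; rewrite /A1norm.
suff -> : [set M%:E | M in [set M : R | 0 < M /\ A1 D (M^-1 *: f)]] = set0.
  by rewrite ereal_inf0.
by apply/seteqP; split => // x [M [M0 MD] _]; apply: noM; exists M.
Qed.

Lemma ip_le_A1norm (D : set V) f a (s : R) : 0 <= s ->
  (forall g, D g -> ip a g <= s) -> (A1norm D f < +oo)%E ->
  ip a f <= fine (A1norm D f) * s.
Proof.
move=> s0 Dle Dlty.
have scaled (M : R) : 0 < M -> A1 D (M^-1 *: f) -> ip a f <= M * s.
  move=> M0 /(A1_ip_le Dle); rewrite ipZr.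
  by rewrite mulrC -ler_pdivlMr ?invr_gt0 // invrK mulrC.
have [s_eq0|s_neq0] := eqVneq s 0.
  have [M M0 /(scaled _ M0)] := A1norm_lty_scaled_mem Dlty.
  by rewrite s_eq0 !mulr0.
have s_gt0 : 0 < s by rewrite lt_def s_neq0.
rewrite -ler_pdivrMr // -lee_fin fineK ?A1norm_fin_num //.
apply: le_ereal_inf_tmp => _ [M [M0 MD] <-].
by rewrite lee_fin ler_pdivrMr // scaled.
Qed.

Lemma sqr_normD_orth x y : ip x y = 0 -> `|x + y| ^+ 2 = `|x| ^+ 2 + `|y| ^+ 2.
Proof. by move=> xy; rewrite -!ipxx ipDl !ipDr (ipC y x) xy; ring. Qed.

Lemma sqr_normB_unit x g : `|g| = 1 ->
  `|x - ip x g *: g| ^+ 2 = `|x| ^+ 2 - ip x g ^+ 2.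
Proof.
move=> g1; rewrite -!ipxx ipBl !ipBr !ipZl !ipZr (ipC g x) (ipxx g) g1; ring.
Qed.

Lemma orth_proj_le (S : set V) f p q :
  is_orth_proj ip S f p -> S q -> `|f - p| ^+ 2 <= `|f - q| ^+ 2.
Proof.
move=> [Sp perp] Sq.
have -> : f - q = (f - p) + (p - q) by rewrite addrA subrK.
rewrite (@sqr_normD_orth (f - p) (p - q)) ?lerDl ?sqr_ge0 //.
by rewrite ipBr !perp // subr0.
Qed.

Section OrthogonalGreedy.
Variables (D : set V) (f : V) (gs G : nat -> V).
Hypotheses (D_dict : dictionary D) (OGA : OGA_realization ip D f gs G).

Local Notation picked k := [set gs i | i in [set i : nat | (i < k)%N]].

Lemma OGA_residual_perp k x : span_set (picked k) x -> ip (f - G k) x = 0.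
Proof. by have [[_ perp] _ _] := OGA k; apply: perp. Qed.

Lemma OGA_residual_ip k : ip (f - G k) f = `|f - G k| ^+ 2.
Proof.
have [[Gk _] _ _] := OGA k.
by rewrite -ipxx [in RHS]ipBr (OGA_residual_perp Gk) subr0.
Qed.

Lemma OGA_residual_le k : `|f - G k| <= `|f|.
Proof.
have := ip_le_norm (f - G k) f; rewrite OGA_residual_ip expr2.
have [->|r0] := eqVneq `|f - G k| 0; first by rewrite normr_ge0.
by rewrite ler_pM2l // lt_def r0 normr_ge0.
Qed.

Lemma OGA_coef_ge0 k : 0 <= ip (f - G k) (gs k).
Proof.
have [_ _ Dsym] := D_dict; have [_ Dgs gmax] := OGA k.
by have := gmax _ (Dsym _ Dgs); rewrite ipNr; lra.
Qed.

Lemma OGA_residual_step k :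
  `|f - G k.+1| ^+ 2 <= `|f - G k| ^+ 2 - ip (f - G k) (gs k) ^+ 2.
Proof.
have [Dunit _ _] := D_dict; have [[Gk _] Dgs _] := OGA k.
rewrite -sqr_normB_unit; last exact: Dunit.
set c := ip (f - G k) (gs k).
have -> : f - G k - c *: gs k = f - (G k + c *: gs k) by rewrite opprD addrA.
have [proj _ _] := OGA k.+1; apply: orth_proj_le proj _.
apply: span_setDZ; last by exists k => /=.
by apply: span_set_sub Gk => _ [i ik <-]; exists i => //; apply: ltnW.
Qed.

Lemma OGA_residual_rate m : (A1norm D f < +oo)%E ->
  m%:R * `|f - G m| ^+ 2 <= fine (A1norm D f) ^+ 2.
Proof.
move=> Dlty; apply: (greedy_decay_bound (a := fun k => `|f - G k| ^+ 2)
  (c := fun k => ip (f - G k) (gs k))) => [k|k|k].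
- exact: sqr_ge0.
- exact: OGA_residual_step.
- rewrite -OGA_residual_ip; apply: ip_le_A1norm => //; first exact: OGA_coef_ge0.
  by have [_ _ gmax] := OGA k.
Qed.

End OrthogonalGreedy.

Definition orthonormal n (e : nat -> V) :=
  forall i j, (i < n)%N -> (j < n)%N -> ip (e i) (e j) = (i == j)%:R.

Lemma ip_sum_orthonormal n e (c : nat -> R) k j : orthonormal n e -> (j < n)%N ->
  ip (\sum_(k <= i < n) c i *: e i) (e j) = if (k <= j)%N then c j else 0.
Proof.
move=> e_on jn; rewrite ip_suml.
rewrite (eq_big_nat _ _ (F2 := fun i => if i == j then c i else 0)); last first.
  move=> i /andP[_ ilt].
  by rewrite e_on // (fun_if (fun b => c i * b%:R)) mulr1 mulr0.
by rewrite -big_mkcond big_nat1_eq jn andbT.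
Qed.

Lemma unit_orthonormal n e i : orthonormal n e -> (i < n)%N -> `|e i| = 1.
Proof.
move=> e_on ilt; apply/eqP; rewrite -(@eqrXn2 _ 2) ?expr1n //.
by rewrite -ipxx e_on // eqxx.
Qed.

Lemma orthonormal_residual_perp n e x j : orthonormal n e -> (j < n)%N ->
  ip (x - \sum_(i < n) ip x (e i) *: e i) (e j) = 0.
Proof.
move=> e_on jn; rewrite ipBl -(big_mkord xpredT (fun i => ip x (e i) *: e i)).
by rewrite ip_sum_orthonormal // subrr.
Qed.

Lemma exists_orthonormal n : @infinite_dim R V -> exists e, orthonormal n e.
Proof.
move=> V_inf; elim: n => [|n [e e_on]]; first by exists (fun=> 0).
have [x xNspan] := V_inf n (fun i => e i).
pose r := x - \sum_(i < n) ip x (e i) *: e i.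
have r_neq0 : r != 0.
  apply: contra_notN xNspan; rewrite subr_eq0 => /eqP ->.
  by exists n, (fun i => ip x (e i)), (fun i => e i); split => // i; exists i.
pose u := `|r|^-1 *: r.
have u_perp j : (j < n)%N -> ip u (e j) = 0.
  by move=> jn; rewrite ipZl orthonormal_residual_perp // mulr0.
exists (fun i => if i == n then u else e i) => i j; rewrite !ltnS => iN jN.
case: (eqVneq i n) => [->|ni]; case: (eqVneq j n) => [jn|nj]; rewrite ?jn.
- by rewrite ipxx normfZV // expr1n.
- by rewrite u_perp ?ltn_neqAle ?nj // eq_sym (negbTE nj).
- by rewrite ipC u_perp ?ltn_neqAle ?ni // (negbTE ni).
- by rewrite e_on // ltn_neqAle ?ni ?nj.
Qed.

Section FlatTail.
Variables (N : nat) (e : nat -> V).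
Hypotheses (e_on : orthonormal N e) (N_gt0 : (0 < N)%N).

Definition tail k : V := \sum_(k <= i < N) N%:R^-1 *: e i.

Definition tail_dict : set V := [set g |
  (exists2 i, (i < N)%N & g = e i \/ g = - e i) \/
  (`|g| = 1 /\ forall i, (i < N)%N -> ip g (e i) = 0)].

(* Beyond N the residual vanishes, so every element of the dictionary is a
   greedy choice. *)
Definition tail_pick k : V := e (if (k < N)%N then k else 0%N).

Definition tail_approx k : V := tail 0 - tail k.

Lemma ip_tail k j : (j < N)%N -> ip (tail k) (e j) = (k <= j)%:R / N%:R.
Proof.
by move=> jN; rewrite ip_sum_orthonormal //; case: leqP; rewrite ?mul1r ?mul0r.
Qed.

Lemma ip_tail_perp k g :
  (forall i, (i < N)%N -> ip g (e i) = 0) -> ip (tail k) g = 0.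
Proof.
move=> g_perp; rewrite ip_suml big_nat_cond big1 // => i /andP[/andP[_ iN] _].
by rewrite ipC g_perp ?mulr0.
Qed.

Lemma sqr_norm_tail k : (k <= N)%N -> `|tail k| ^+ 2 = (N - k)%:R / N%:R ^+ 2.
Proof.
move=> kN; rewrite -ipxx [X in ip X _]/tail ip_suml.
rewrite (eq_big_nat _ _ (F2 := fun=> N%:R^-2)) ?sumr_const_nat ?mulr_natl //.
by move=> i /andP[ki iN]; rewrite ipC ip_tail // ki mul1r -expr2 exprVn.
Qed.

Lemma ip_tail_pick k : ip (tail k) (tail_pick k) = (k < N)%:R / N%:R.
Proof.
rewrite /tail_pick; case: ltnP => kN; rewrite ip_tail ?leqnn //.
by rewrite leqn0 gtn_eqF // (leq_trans N_gt0 kN).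
Qed.

Lemma ip_tail_dict_le k g : tail_dict g -> ip (tail k) g <= (k < N)%:R / N%:R.
Proof.
have bound_ge0 : 0 <= (k < N)%:R / N%:R :> R by rewrite divr_ge0.
case=> [[i iN [->|->]]|[_ g_perp]]; last by rewrite ip_tail_perp.
  rewrite ip_tail // ler_pM2r ?invr_gt0 ?ltr0n // ler_nat.
  by have [ki|//] := leqP k i; rewrite (leq_ltn_trans ki iN).
by rewrite ipNr ip_tail // (le_trans _ bound_ge0) // oppr_le0 divr_ge0.
Qed.

Lemma tail_dict_e i : (i < N)%N -> tail_dict (e i).
Proof. by move=> iN; left; exists i => //; left. Qed.

Lemma tail_dict_dictionary : dictionary tail_dict.
Proof.
split.
- move=> g [[i iN [->|->]]|[g1 _]] //.
  + exact: unit_orthonormal e_on iN.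
  + by rewrite normrN (unit_orthonormal e_on iN).
- apply/seteqP; split => // x _; apply: subset_closure.
  pose b := \sum_(i < N) ip x (e i) *: e i; pose r := x - b.
  have b_span : span_set tail_dict b.
    exists N, (fun i => ip x (e i)), (fun i => e i); split => // i.
    exact: tail_dict_e.
  have [r0|r_neq0] := eqVneq r 0.
    by have -> : x = b by apply/eqP; rewrite -subr_eq0 -/r r0.
  have -> : x = b + `|r| *: (`|r|^-1 *: r).
    by rewrite scalerA mulfV ?normr_eq0 // scale1r addrC subrK.
  apply: span_setDZ => //; right; split; first exact: normfZV.
  by move=> i iN; rewrite ipZl orthonormal_residual_perp ?mulr0.
- move=> g [[i iN [->|->]]|[g1 g_perp]].
  + by left; exists i => //; right.
  + by left; exists i => //; left; rewrite opprK.
  + by right; split=> [|i iN]; rewrite ?normrN // ipNl g_perp ?oppr0.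
Qed.

Lemma tail_approxS k :
  tail_approx k.+1 = tail_approx k + (k < N)%:R / N%:R *: tail_pick k.
Proof.
rewrite /tail_approx /tail_pick; case: ltnP => kN.
  by rewrite [tail k](big_ltn kN) -/(tail k.+1) mul1r opprD addrA addrAC subrK.
by rewrite [tail k]big_geq // [tail k.+1]big_geq ?mul0r ?scale0r ?addr0 // ltnW.
Qed.

Lemma tail_residual k : tail 0 - tail_approx k = tail k.
Proof. by rewrite /tail_approx opprB addrC subrK. Qed.

Lemma tail_greedy : OGA_realization ip tail_dict (tail 0) tail_pick tail_approx.
Proof.
move=> k; split; [split|..].
- elim: k => [|k IH]; first by rewrite /tail_approx subrr; apply: span_set0.
  rewrite tail_approxS; apply: span_setDZ; last by exists k => /=.
  by apply: span_set_sub IH => _ [i ik <-]; exists i => //; apply: ltnW.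
- move=> s; rewrite tail_residual; apply: ip_span_eq0 => _ [i ik <-].
  rewrite /tail_pick ip_tail; last by case: ifP.
  by rewrite leqNgt (leq_ltn_trans _ ik) ?mul0r //; case: ifP.
- by apply: tail_dict_e; case: ifP.
- by move=> g Dg; rewrite tail_residual ip_tail_pick ip_tail_dict_le.
Qed.

Lemma A1norm_tail : A1norm tail_dict (tail 0) = 1%:E.
Proof.
have le1 : (A1norm tail_dict (tail 0) <= 1%:E)%E.
  apply: ereal_inf_lbound; exists 1 => //; split; first exact: ltr01.
  rewrite invr1 scale1r; apply: subset_closure.
  exists N, (fun=> N%:R^-1), (fun i => e i); split.
  - by move=> i; apply: tail_dict_e.
  - by move=> i; rewrite invr_ge0.
  - by rewrite /= sumr_const card_ord -[_ *+ N]mulr_natl mulfV // pnatr_eq0 -lt0n.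
  - by rewrite /tail big_mkord.
have fin : (A1norm tail_dict (tail 0) < +oo)%E.
  by apply: le_lt_trans le1 _; rewrite ltry.
have ge1 : 1 <= fine (A1norm tail_dict (tail 0)).
  have s0 : 0 <= (0 < N)%:R / N%:R :> R by rewrite divr_ge0.
  have := ip_le_A1norm s0 (@ip_tail_dict_le 0) fin.
  rewrite ipxx sqr_norm_tail // subn0 N_gt0 mul1r.
  have -> : N%:R / N%:R ^+ 2 = N%:R^-1 :> R.
    by rewrite expr2 invfM mulrA mulfV ?mul1r // pnatr_eq0 -lt0n.
  by rewrite ler_pMl // invr_gt0 ltr0n.
by apply/eqP; rewrite eq_le le1 /= -(fineK (A1norm_fin_num fin)) lee_fin.
Qed.

End FlatTail.

Lemma gamma_o_le m (a : R) : (0 < m)%N -> 0 < a <= 1 ->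
  (gamma_o ip m a <= (m%:R `^ (- a / 2))%:E)%E.
Proof.
move=> m_gt0 /andP[a_gt0 a1].
apply: ge_ereal_sup => _ [r [D [f [gs [G [D_dict _ Dlty OGA ->]]]]] <-].
rewrite lee_fin -powR_Nhalf_powR.
have A_ge0 : 0 <= fine (A1norm D f) by apply: fine_ge0; apply: A1norm_ge0.
have res_le : 0 <= `|f - G m| <= `|f| by rewrite normr_ge0 (OGA_residual_le OGA).
have a01 : 0 <= a <= 1 by rewrite ltW.
apply: (ratio_le_powR res_le A_ge0 (powR_ge0 _ _) _ a01).
rewrite -(ler_pXn2r (isT : (0 < 2)%N)) ?nnegrE ?normr_ge0 ?mulr_ge0 ?powR_ge0 //.
rewrite exprMn sqr_powR_Nhalf // ler_pdivlMr ?ltr0n // mulrC.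
exact: OGA_residual_rate.
Qed.

Lemma gamma_o_ge m (a : R) : @infinite_dim R V -> (0 < m)%N -> 0 < a <= 1 ->
  ((1 / 2 * m%:R `^ (- a / 2))%:E <= gamma_o ip m a)%E.
Proof.
move=> V_inf m_gt0 /andP[a_gt0 a1].
pose N := (2 * m)%N; have N_gt0 : (0 < N)%N by rewrite muln_gt0.
have [e e_on] := exists_orthonormal N V_inf.
have m_neq0 : m%:R != 0 :> R by rewrite pnatr_eq0 -lt0n.
have A1f := A1norm_tail e_on N_gt0.
pose t : R := m%:R `^ (-1 / 2).
have t2 : t ^+ 2 = m%:R^-1 by rewrite sqr_powR_Nhalf.
have tail_m : `|tail N e m| = t / 2.
  apply/eqP; rewrite -(@eqrXn2 _ 2) ?nnegrE ?divr_ge0 ?powR_ge0 //.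
  rewrite expr_div_n t2 sqr_norm_tail // ?leq_pmull //.
  have -> : (N - m = m)%N by rewrite /N mul2n -addnn addnK.
  by apply/eqP; rewrite natrM; field.
have tail_0 : `|tail N e 0| ^+ 2 = (2 * m%:R)^-1.
  by rewrite sqr_norm_tail // subn0 natrM; field.
have f_gt0 : 0 < `|tail N e 0|.
  have : 0 < `|tail N e 0| ^+ 2 by rewrite tail_0 invr_gt0 mulr_gt0 ?ltr0n.
  by have := normr_ge0 (tail N e 0); nra.
have f_le : `|tail N e 0| <= t.
  rewrite -(ler_pXn2r (isT : (0 < 2)%N)) ?nnegrE ?powR_ge0 // tail_0 t2.
  by rewrite lef_pV2 ?ler_peMl ?ler1n // posrE ?mulr_gt0 ?ltr0n.
apply: le_trans (ereal_sup_ubound _); last first.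
  exists (`|tail N e m| / `|tail N e 0| `^ (1 - a)) => //.
  exists (tail_dict N e), (tail N e 0), (tail_pick N e), (tail_approx N e); split.
  - exact: tail_dict_dictionary.
  - by rewrite -normr_gt0.
  - by rewrite A1f ltry.
  - exact: tail_greedy.
  - by rewrite tail_residual A1f /= powR1 mulr1.
rewrite lee_fin -powR_Nhalf_powR -/t tail_m mul1r mulrC mulrAC.
rewrite ler_pM2r ?invr_gt0 //; apply: powR_le_ratio; first by rewrite f_gt0 f_le.
by rewrite ltW.
Qed.

End InnerProduct.

Theorem mainTheorem4 (R : realType) (V : completeNormedModType R)
  (ip : V -> V -> R) (Hip : is_inner_product ip) (Hinf : @infinite_dim R V)
  (m : nat) (alpha : R) :
  (1 <= m)%N -> 0 < alpha <= 1 ->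
  (((1 / 2) * (m%:R `^ (- alpha / 2)))%:E <= gamma_o ip m alpha)%E /\
  (gamma_o ip m alpha <= (m%:R `^ (- alpha / 2))%:E)%E.
Proof.
by move=> m_gt0 alpha01; split; [exact: gamma_o_ge | exact: gamma_o_le].
Qed.
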